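(* Let $\bar F^a,\bar F^b:\mathbb{R}^n\times(0,\infty)\to\mathbb{R}^n$ be closed-loop discrete-time models and suppose that $\bar F^a$ is EPC with $\bar F^b$. Then: (i) $\bar F^a$ is SPS-VSR if and only if $\bar F^b$ is SPS-VSR; (ii) $\bar F^a$ is LES-VSR if and only if $\bar F^b$ is LES-VSR; (iii) $\bar F^a$ is SLES-VSR if and only if $\bar F^b$ is SLES-VSR.
   Context: A closed-loop discrete-time (DT) model is a map $\bar F:\mathbb{R}^n\times(0,\infty)\to\mathbb{R}^n$; its solutions under a sampling-period sequence $\{T_i\}_{i=0}^\infty$ are given by $x_{k+1}=\bar F(x_k,T_k)$, $k\in\mathbb{N}_0$. For $T>0$, $\Phi(T)$ denotes the set of all sequences $\{T_i\}_{i=0}^\infty$ with $T_i\in(0,T)$ for all $i$; by convention $\sum_{i=0}^{-1}T_i=0$. $|\cdot|$ is the Euclidean norm. $\mathcal{K}$: continuous strictly increasing $\alpha:\mathbb{R}_{\ge0}\to\mathbb{R}_{\ge0}$ with $\alpha(0)=0$; $\mathcal{K}_\infty$: unbounded functions in $\mathcal{K}$; $\mathcal{KL}$: $\beta:\mathbb{R}_{\ge0}^2\to\mathbb{R}_{\ge0}$ with $\beta(\cdot,t)\in\mathcal{K}$ for each $t$ and $\beta(s,\cdot)$ strictly decreasing to $0$ for each $s$. EPC: $\bar F^a$ is Equilibrium-Preserving Consistent (EPC) with $\bar F^b$ if for each $M\ge0$ there exist $K=K(M)>0$, $T^*=T^*(M)>0$ and $\rho\in\mathcal{K}_\infty$ such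 that $|\bar F^a(x,T)-\bar F^b(y,T)|\le(1+KT)|x-y|+T\rho(T)\max\{|x|,|y|\}$ for all $|x|,|y|\le M$ and $T\in(0,T^* )$. SPS-VSR: there exists $\beta\in\mathcal{KL}$ such that for every $M\ge0$ and $R>0$ there exists $T^\star=T^\star(M,R)>0$ such that for all $k\in\mathbb{N}_0$, $\{T_i\}\in\Phi(T^\star)$ and $|x_0|\le M$, the solutions satisfy $|x_k|\le\beta(|x_0|,\sum_{i=0}^{k-1}T_i)+R$. LES-VSR: there exist $K\ge1$ and $R,T^\star,\lambda>0$ such that for all $k\in\mathbb{N}_0$, $\{T_i\}\in\Phi(T^\star)$ and $|x_0|\le R$, the solutions satisfy $|x_k|\le K|x_0|e^{-\lambda\sum_{i=0}^{k-1}T_i}$. SLES-VSR: both SPS-VSR and LES-VSR. *)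

From HB Require Import structures.
From mathcomp Require Import all_boot all_order all_algebra.
From mathcomp Require Import all_classical all_reals all_analysis.
Set Implicit Arguments. Unset Strict Implicit. Unset Printing Implicit Defensive.
Import Order.TTheory GRing.Theory Num.Theory.
Import numFieldNormedType.Exports.
Local Open Scope classical_set_scope.
Local Open Scope ring_scope.

Section Defs.
Variable R : realType.

Definition enorm (n : nat) (x : 'rV[R]_n) : R :=
  Num.sqrt (\sum_(i < n) (x ord0 i) ^+ 2).

Definition class_K (a : R -> R) : Prop :=
  {within [set x : R | 0 <= x], continuous a} /\
  (forall x y : R, 0 <= x -> x < y -> a x < a y) /\
  a 0 = 0.

Definition class_Kinf (a : R -> R) : Prop :=
  class_K a /\ (forall M : R, exists s : R, 0 <= s /\ M < a s).

Definition class_KL (b : R -> R -> R) : Prop :=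
  (forall t : R, 0 <= t -> class_K (fun s => b s t)) /\
  (forall s : R, 0 < s ->
     (forall t1 t2 : R, 0 <= t1 -> t1 < t2 -> b s t2 < b s t1) /\
     (b s t @[t --> +oo] --> (0 : R))).

(* closed-loop DT model: F x T (only T > 0 is ever used) *)
Definition DTmodel (n : nat) := 'rV[R]_n -> R -> 'rV[R]_n.

Fixpoint sol (n : nat) (F : DTmodel n) (x0 : 'rV[R]_n) (Ts : nat -> R) (k : nat)
  : 'rV[R]_n :=
  match k with
  | O => x0
  | S k' => F (sol F x0 Ts k') (Ts k')
  end.

Definition tsum (Ts : nat -> R) (k : nat) : R := \sum_(i < k) Ts i.

Definition inPhi (T : R) (Ts : nat -> R) : Prop := forall i, 0 < Ts i < T.

Definition EPC (n : nat) (Fa Fb : DTmodel n) : Prop :=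
  forall M : R, 0 <= M ->
  exists K Tstar : R, 0 < K /\ 0 < Tstar /\
  exists rho : R -> R, class_Kinf rho /\
  forall (x y : 'rV[R]_n) (T : R),
    enorm x <= M -> enorm y <= M -> 0 < T < Tstar ->
    enorm (Fa x T - Fb y T) <=
      (1 + K * T) * enorm (x - y) + T * rho T * Num.max (enorm x) (enorm y).

Definition SPS_VSR (n : nat) (F : DTmodel n) : Prop :=
  exists beta : R -> R -> R, class_KL beta /\
  forall M Rr : R, 0 <= M -> 0 < Rr ->
  exists Tstar : R, 0 < Tstar /\
  forall (k : nat) (Ts : nat -> R) (x0 : 'rV[R]_n),
    inPhi Tstar Ts -> enorm x0 <= M ->
    enorm (sol F x0 Ts k) <= beta (enorm x0) (tsum Ts k) + Rr.

Definition LES_VSR (n : nat) (F : DTmodel n) : Prop :=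
  exists K Rr Tstar lam : R, 1 <= K /\ 0 < Rr /\ 0 < Tstar /\ 0 < lam /\
  forall (k : nat) (Ts : nat -> R) (x0 : 'rV[R]_n),
    inPhi Tstar Ts -> enorm x0 <= Rr ->
    enorm (sol F x0 Ts k) <= K * enorm x0 * expR (- (lam * tsum Ts k)).

Definition SLES_VSR (n : nat) (F : DTmodel n) : Prop :=
  SPS_VSR F /\ LES_VSR F.

End Defs.

From HB Require Import structures.
From mathcomp Require Import all_boot all_order all_algebra.
From mathcomp Require Import all_classical all_reals all_analysis.
From mathcomp Require Import ring lra.
Import Order.TTheory GRing.Theory Num.Theory.
Local Open Scope ring_scope.

(* EPC is symmetric, so it suffices to transfer each property from Fb to Fa.
   On a bounded horizon H, EPC and a discrete Gronwall estimate show that,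
   for small enough sampling periods (so that rho(T) is small), the Fa- and
   Fb-solutions from the same initial state stay within eps * B of each other,
   where B bounds the Fb-solution.  Choosing H a little longer than the time
   tau after which the Fb-estimate has decayed, every Fa-solution re-enters a
   smaller ball (SPS) or halves its norm (LES) within each window of length H;
   restarting the argument at that sampling instant gives the estimate for all
   k, with decay rate ln 2 / H in the exponential case. *)

Section EuclideanNorm.
Context {R : realType} {n : nat}.
Implicit Types x y : 'rV[R]_n.

Lemma enorm_ge0 x : 0 <= enorm x.
Proof. exact: sqrtr_ge0. Qed.

Lemma enormN x : enorm (- x) = enorm x.
Proof. by congr Num.sqrt; apply: eq_bigr => i _; rewrite mxE sqrrN. Qed.

Lemma enormB x y : enorm (x - y) = enorm (y - x).
Proof. by rewrite -enormN opprB. Qed.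

Lemma sumsq_ge0 (f : 'I_n -> R) : 0 <= \sum_i f i ^+ 2.
Proof. by apply: sumr_ge0 => i _; exact: sqr_ge0. Qed.

Lemma sqrt_sumsq_eq0 {f : 'I_n -> R} :
  Num.sqrt (\sum_i f i ^+ 2) = 0 -> forall i, f i = 0.
Proof.
move/eqP; rewrite sqrtr_eq0 => S_le0 i; apply/eqP; rewrite -sqrf_eq0; apply/eqP.
have S0 : \sum_i f i ^+ 2 = 0 by apply/le_anti; rewrite S_le0 sumsq_ge0.
exact: (psumr_eq0P (P := xpredT) (fun j _ => sqr_ge0 (f j)) S0).
Qed.

Lemma cauchy_schwarz (f g : 'I_n -> R) :
  \sum_i f i * g i <=
  Num.sqrt (\sum_i f i ^+ 2) * Num.sqrt (\sum_i g i ^+ 2).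
Proof.
set a := Num.sqrt _; set d := Num.sqrt _.
have [a0|an0] := eqVneq a 0.
  by rewrite a0 mul0r big1 // => i _; rewrite (sqrt_sumsq_eq0 a0 i) mul0r.
have [d0|dn0] := eqVneq d 0.
  by rewrite d0 mulr0 big1 // => i _; rewrite (sqrt_sumsq_eq0 d0 i) mulr0.
have a_gt0 : 0 < a by rewrite lt_neqAle eq_sym an0 sqrtr_ge0.
have d_gt0 : 0 < d by rewrite lt_neqAle eq_sym dn0 sqrtr_ge0.
have a2 : a ^+ 2 = \sum_i f i ^+ 2 by rewrite sqr_sqrtr ?sumsq_ge0.
have d2 : d ^+ 2 = \sum_i g i ^+ 2 by rewrite sqr_sqrtr ?sumsq_ge0.
have := sumsq_ge0 (fun i => f i * d - g i * a).
have -> : \sum_i (f i * d - g i * a) ^+ 2 = d ^+ 2 * \sum_i f i ^+ 2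
    + a ^+ 2 * \sum_i g i ^+ 2 - 2 * (a * d) * \sum_i f i * g i.
  rewrite !mulr_sumr -big_split -sumrB /=.
  by apply: eq_bigr => i _; ring.
rewrite -a2 -d2 => h.
have ad_gt0 : 0 < a * d by exact: mulr_gt0.
rewrite -(ler_pM2l ad_gt0); nra.
Qed.

Lemma enormD x y : enorm (x + y) <= enorm x + enorm y.
Proof.
have nx := enorm_ge0 x; have ny := enorm_ge0 y.
rewrite -(ger0_norm (addr_ge0 nx ny)) -sqrtr_sqr /enorm ler_sqrt ?sqr_ge0 //.
have -> : \sum_i (x + y) ord0 i ^+ 2 = \sum_i x ord0 i ^+ 2 + \sum_i y ord0 i ^+ 2
    + 2 * \sum_i x ord0 i * y ord0 i.
  by rewrite mulr_sumr -!big_split /=; apply: eq_bigr => i _; rewrite mxE; ring.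
rewrite sqrrD !sqr_sqrtr ?sumsq_ge0 //.
have := cauchy_schwarz (x ord0) (y ord0); rewrite -mulr_natl; lra.
Qed.

Lemma enorm_le_add_dist x y : enorm x <= enorm y + enorm (x - y).
Proof. by have := enormD y (x - y); rewrite addrC subrK. Qed.

Lemma enorm_subrr x : enorm (x - x) = 0.
Proof. by rewrite subrr /enorm big1 ?sqrtr0 // => i _; rewrite mxE expr0n. Qed.

End EuclideanNorm.

Section ComparisonFunctions.
Context {R : realType}.

Lemma class_K_le {a : R -> R} {x y : R} : class_K a ->
  0 <= x -> x <= y -> a x <= a y.
Proof.
move=> [_ [inc _]] x0; rewrite le_eqVlt => /orP[/eqP->//|xy].
exact/ltW/inc.
Qed.

Lemma class_K_ge0 {a : R -> R} {x : R} : class_K a -> 0 <= x -> 0 <= a x.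
Proof.
by move=> aK x0; have := class_K_le aK (lexx 0) x0; case: aK => _ [_ ->].
Qed.

Lemma class_K_small {a : R -> R} {e : R} : class_K a -> 0 < e ->
  exists2 d, 0 < d & forall x, 0 <= x <= d -> a x <= e.
Proof.
case=> + [_ a0] e_gt0.
have -> : [set x : R | 0 <= x]%classic = `[0, +oo[%classic by rewrite set_itvcy.
move=> /(continuous_within_itvcyP 0 a).1 [_ /cvgrPdist_le /(_ e e_gt0)].
rewrite a0 => /nbhs_ballP [d d_gt0 near0].
exists (d / 2) => [|x /andP[x_ge0 x_le]]; first by rewrite divr_gt0.
have [->|x_neq0] := eqVneq x 0; first by rewrite a0 ltW.
have x_gt0 : 0 < x by rewrite lt_neqAle eq_sym x_neq0.
have x_lt_d : x < d by rewrite (le_lt_trans x_le) // ltr_pdivrMr // ltr_pMr // ltr1n.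
have := near0 x; rewrite /ball_ /= sub0r normrN ger0_norm // => /(_ x_lt_d x_gt0).
by rewrite sub0r normrN; exact: le_trans (ler_norm _).
Qed.

Lemma class_KL_le {b : R -> R -> R} {s s' t t' : R} : class_KL b ->
  0 <= s -> s <= s' -> 0 <= t' -> t' <= t -> b s t <= b s' t'.
Proof.
move=> [bK b_dec] s0 ss' t'0 tt'.
have t0 : 0 <= t by exact: le_trans tt'.
apply: le_trans (class_K_le (bK t t0) s0 ss') _.
have [->|s'_neq0] := eqVneq s' 0.
  by case: (bK t t0) => _ [_ ->]; case: (bK t' t'0) => _ [_ ->].
have s'_gt0 : 0 < s' by rewrite lt_neqAle eq_sym s'_neq0 (le_trans s0 ss').
move: tt'; rewrite le_eqVlt => /orP[/eqP->//|tt'].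
exact/ltW/((b_dec s' s'_gt0).1).
Qed.

Lemma class_KL_ge0 {b : R -> R -> R} {s t : R} : class_KL b ->
  0 <= s -> 0 <= t -> 0 <= b s t.
Proof. by move=> [bK _] s0 t0; exact: class_K_ge0 (bK t t0) s0. Qed.

Lemma class_KL_small {b : R -> R -> R} {s e : R} : class_KL b ->
  0 < s -> 0 < e -> exists2 tau, 0 < tau & b s tau <= e.
Proof.
move=> [_ b_dec] s_gt0 e_gt0.
have [_ /cvgrPdist_le /(_ e e_gt0) [M [_ bM]]] := b_dec s s_gt0.
exists (Num.max M 0 + 1); first by rewrite ltr_pwDr // le_max lexx orbT.
have := bM (Num.max M 0 + 1); rewrite sub0r normrN => b_le.
by apply: le_trans (ler_norm _) (b_le _); rewrite ltr_pwDr // le_max lexx.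
Qed.

End ComparisonFunctions.

Section SamplingSequences.
Context {R : realType}.
Implicit Types (Ts : nat -> R) (T tau : R).

Definition tshift Ts m : nat -> R := fun i => Ts (m + i)%N.

Lemma tsum0 Ts : tsum Ts 0 = 0.
Proof. by rewrite /tsum big_ord0. Qed.

Lemma tsumS Ts k : tsum Ts k.+1 = tsum Ts k + Ts k.
Proof. by rewrite /tsum big_ord_recr. Qed.

Lemma tsumD Ts m k : tsum Ts (m + k) = tsum Ts m + tsum (tshift Ts m) k.
Proof. by rewrite /tsum big_split_ord. Qed.

Lemma inPhi_tshift {T Ts} m : inPhi T Ts -> inPhi T (tshift Ts m).
Proof. by move=> TsT i; exact: TsT. Qed.

Lemma inPhi_le T T' Ts : T <= T' -> inPhi T Ts -> inPhi T' Ts.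
Proof.
by move=> TT' TsT i; have /andP[-> /lt_le_trans ->] := TsT i.
Qed.

Lemma tsum_ge0 {T Ts} k : inPhi T Ts -> 0 <= tsum Ts k.
Proof. by move=> TsT; apply: sumr_ge0 => i _; have /andP[/ltW] := TsT i. Qed.

Lemma solD {n} (F : DTmodel R n) x0 Ts m k :
  sol F x0 Ts (m + k) = sol F (sol F x0 Ts m) (tshift Ts m) k.
Proof. by elim: k => [|k IH]; rewrite ?addn0 // addnS /= IH. Qed.

Lemma first_passage {T Ts} tau k : inPhi T Ts -> 0 < tau ->
  tsum Ts k < tau \/
  exists m, [/\ (0 < m <= k)%N, tau <= tsum Ts m & tsum Ts m < tau + T].
Proof.
move=> TsT tau_gt0; elim: k => [|k [lt_tau|[m [mk tau_le lt_tauT]]]].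
- by left; rewrite tsum0.
- have [|tau_le] := ltP (tsum Ts k.+1) tau; first by left.
  right; exists k.+1; split; rewrite ?leqnn //.
  by rewrite tsumS; have /andP[_ TkT] := TsT k; exact: ltrD.
- by right; exists m; split => //; case/andP: mk => -> /leqW.
Qed.

Lemma sol_passage {n} (F : DTmodel R n) {T Ts} tau x0 k : inPhi T Ts -> 0 < tau ->
  tsum Ts k < tau \/
  exists m, [/\ (0 < m <= k)%N, tau <= tsum Ts m < tau + T,
    sol F x0 Ts k = sol F (sol F x0 Ts m) (tshift Ts m) (k - m) &
    tsum Ts k = tsum Ts m + tsum (tshift Ts m) (k - m)].
Proof.
move=> TsT tau_gt0; case: (first_passage tau k TsT tau_gt0) => [|[m [mk tau_le lt_tauT]]].
  by left.
right; exists m; have /andP[_ m_le_k] := mk.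
by rewrite -solD -tsumD subnKC // tau_le lt_tauT.
Qed.

End SamplingSequences.

Section DiscreteGronwall.
Context {R : realType}.

(* Solution of the ODE e' = (K + r) e + r B with e(0) = 0; it dominates the
   recursion e_(k+1) = (1 + K T_k) e_k + T_k r (B + e_k) that EPC yields for
   the distance between the two solutions. *)
Definition gronwall_bound (K r B t : R) : R :=
  r * B / (K + r) * (expR ((K + r) * t) - 1).

Lemma gronwall_bound0 K r B : gronwall_bound K r B 0 = 0.
Proof. by rewrite /gronwall_bound mulr0 expR0 subrr mulr0. Qed.

Lemma gronwall_boundS {K r B t T e : R} : 0 < K -> 0 <= r -> 0 <= B -> 0 <= T ->
  e <= gronwall_bound K r B t ->
  (1 + K * T) * e + T * (r * (B + e)) <= gronwall_bound K r B (t + T).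
Proof.
rewrite /gronwall_bound => K_gt0 r_ge0 B_ge0 T_ge0 e_le.
set a := K + r; set c := r * B / a; set u := expR (a * t).
have a_gt0 : 0 < a by rewrite ltr_pwDl.
have c_ge0 : 0 <= c by rewrite divr_ge0 ?mulr_ge0 // ltW.
have ca : c * a = r * B by rewrite /c mulfVK ?gt_eqF.
have aT_ge0 : 0 <= a * T by rewrite mulr_ge0 // ltW.
have linear_exp : 1 + a * T <= expR (a * T) by exact: expR_ge1Dx.
have step : (1 + a * T) * e <= (1 + a * T) * (c * (u - 1)).
  by rewrite ler_wpM2l // addr_ge0.
have grow : c * (u * (1 + a * T)) <= c * (u * expR (a * T)).
  by rewrite ler_wpM2l // ler_wpM2l ?expR_ge0.
rewrite [a * (t + T)]mulrDr expRD -/u.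
have : (1 + K * T) * e + T * (r * (B + e)) = (1 + a * T) * e + c * a * T.
  by rewrite ca /a; ring.
nra.
Qed.

Lemma gronwall_bound_le K r B t H eps : 0 < K -> 0 <= r <= 1 ->
  r * expR ((K + 1) * H) <= eps * K -> 0 <= B -> 0 <= t <= H ->
  gronwall_bound K r B t <= eps * B.
Proof.
rewrite /gronwall_bound => K_gt0 /andP[r_ge0 r_le1] r_small B_ge0 /andP[t_ge0 t_le].
have exp_le : expR ((K + r) * t) <= expR ((K + 1) * H).
  by rewrite ler_expR; nra.
have Kr_gt0 : 0 < K + r by rewrite ltr_pwDl.
have coef_le : r * B / (K + r) <= r * B / K.
  by rewrite ler_wpM2l ?mulr_ge0 // lef_pV2 ?posrE // lerDl.
have exp_ge1 : 1 <= expR ((K + r) * t).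
  by rewrite -expR0 ler_expR mulr_ge0 // ltW.
apply: (@le_trans _ _ (r * B / K * expR ((K + 1) * H))).
  apply: ler_pM => //.
  - by rewrite divr_ge0 ?mulr_ge0 // ltW.
  - by rewrite subr_ge0.
  - by rewrite lerBlDr (le_trans exp_le) // lerDl.
rewrite (_ : r * B / K * _ = r * expR ((K + 1) * H) / K * B); last by ring.
by rewrite ler_wpM2r // ler_pdivrMr.
Qed.

End DiscreteGronwall.

Section Consistency.
Context {R : realType}.

Lemma EPC_sym {n} {Fa Fb : DTmodel R n} : EPC Fa Fb -> EPC Fb Fa.
Proof.
move=> epc M M_ge0; have [K [T [K_gt0 [T_gt0 [rho [rhoK step]]]]]] := epc M M_ge0.
exists K, T; do 2 split => //; exists rho; split => // x y t xM yM tT.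
by rewrite [enorm (Fb _ _ - _)]enormB [enorm (x - y)]enormB maxC; exact: step.
Qed.

Definition EPC_on {n} (Fa Fb : DTmodel R n) (M K Tstar : R) (rho : R -> R) :=
  forall (x y : 'rV[R]_n) (T : R),
    enorm x <= M -> enorm y <= M -> 0 < T < Tstar ->
    enorm (Fa x T - Fb y T) <=
      (1 + K * T) * enorm (x - y) + T * rho T * Num.max (enorm x) (enorm y).

Lemma EPC_on_gronwall_step {n} {Fa Fb : DTmodel R n} {M K Tstar r B t T : R}
    {rho : R -> R} (x y : 'rV[R]_n) :
  EPC_on Fa Fb M K Tstar rho -> class_K rho -> 0 < K -> 0 <= r ->
  0 < T < Tstar -> rho T <= r -> enorm y <= B -> B + enorm (x - y) <= M ->
  enorm (x - y) <= gronwall_bound K r B t ->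
  enorm (Fa x T - Fb y T) <= gronwall_bound K r B (t + T).
Proof.
move=> step rhoK K_gt0 r_ge0 T_range rhoT_le y_le BM e_le.
have /andP[T_gt0 _] := T_range.
have B_ge0 : 0 <= B := le_trans (enorm_ge0 y) y_le.
have e_ge0 := enorm_ge0 (x - y).
have x_le : enorm x <= B + enorm (x - y).
  by rewrite (le_trans (enorm_le_add_dist x y)) // lerD2r.
have max_le : Num.max (enorm x) (enorm y) <= B + enorm (x - y).
  by rewrite ge_max x_le (le_trans y_le) // lerDl.
have yM : enorm y <= M by rewrite (le_trans y_le) // (le_trans _ BM) // lerDl.
apply: le_trans (step x y T (le_trans x_le BM) yM T_range) _.
apply: le_trans (gronwall_boundS K_gt0 r_ge0 B_ge0 (ltW T_gt0) e_le).
rewrite lerD2l -mulrA ler_wpM2l ?(ltW T_gt0) //.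
by apply: ler_pM; rewrite ?le_max ?enorm_ge0 ?(class_K_ge0 rhoK (ltW T_gt0)).
Qed.

(* The Fa-solution stays in the ball where EPC applies because it is within
   eps * B of the Fb-solution. *)
Lemma EPC_finite_horizon {n} {Fa Fb : DTmodel R n} (Bmax H eps T0 : R) :
  EPC Fa Fb -> 0 <= Bmax -> 0 < eps -> 0 < T0 ->
  exists2 Tstar : R, 0 < Tstar <= T0 &
  forall Ts x0 B j, inPhi Tstar Ts -> B <= Bmax ->
    (forall i, enorm (sol Fb x0 Ts i) <= B) -> tsum Ts j <= H ->
    enorm (sol Fa x0 Ts j - sol Fb x0 Ts j) <= eps * B.
Proof.
move=> epc Bmax_ge0 eps_gt0 T0_gt0.
have M_ge0 : 0 <= (1 + eps) * Bmax by rewrite mulr_ge0 // addr_ge0 // ltW.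
have [K [T1 [K_gt0 [T1_gt0 [rho [[rhoK _] step]]]]]] := epc _ M_ge0.
set r := Num.min 1 (eps * K / expR ((K + 1) * H)).
have r_gt0 : 0 < r by rewrite lt_min ltr01 divr_gt0 ?mulr_gt0 ?expR_gt0.
have r_le1 : r <= 1 by rewrite ge_min lexx.
have r_small : r * expR ((K + 1) * H) <= eps * K.
  by rewrite -ler_pdivlMr ?expR_gt0 // ge_min lexx orbT.
have [dT dT_gt0 rho_small] := class_K_small rhoK r_gt0.
exists (Num.min (Num.min T1 dT) T0) => [|Ts x0 B j TsT B_le solb_le].
  by rewrite !lt_min T1_gt0 dT_gt0 T0_gt0 ge_min lexx orbT.
have B_ge0 : 0 <= B := le_trans (enorm_ge0 _) (solb_le 0%N).
have within t : 0 <= t <= H -> gronwall_bound K r B t <= eps * B.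
  by apply: gronwall_bound_le => //; rewrite (ltW r_gt0) r_le1.
suff err j' : tsum Ts j' <= H ->
    enorm (sol Fa x0 Ts j' - sol Fb x0 Ts j') <= gronwall_bound K r B (tsum Ts j').
  by move=> tjH; rewrite (le_trans (err j tjH)) // within // tjH (tsum_ge0 _ TsT).
elim: j' => [|j' IH]; first by rewrite /= enorm_subrr tsum0 gronwall_bound0.
have /andP[T_gt0 T_lt] := TsT j'.
rewrite tsumS /= => tjH.
have tH : tsum Ts j' <= H by rewrite (le_trans _ tjH) // lerDl ltW.
have e_le := IH tH.
have e_eps := le_trans e_le (within _ (introT andP (conj (tsum_ge0 j' TsT) tH))).
apply: (EPC_on_gronwall_step _ _ step rhoK K_gt0 (ltW r_gt0)) e_le.
- by rewrite T_gt0 (lt_le_trans T_lt) // !ge_min lexx.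
- by rewrite rho_small // ltW //= (le_trans (ltW T_lt)) // !ge_min lexx orbT.
- exact: solb_le.
- by nra.
Qed.

End Consistency.

Section Restart.
Context {R : realType} {n : nat} (F : DTmodel R n) {T tau H : R}.

Lemma bounded_of_windows (d c : R) : 0 < tau -> 0 <= T -> tau + T <= H ->
  (forall Ts x0 j, inPhi T Ts -> enorm x0 <= d -> tsum Ts j <= H ->
     enorm (sol F x0 Ts j) <= c) ->
  (forall Ts x0 j, inPhi T Ts -> enorm x0 <= d -> tau <= tsum Ts j <= H ->
     enorm (sol F x0 Ts j) <= d) ->
  forall k Ts x0, inPhi T Ts -> enorm x0 <= d -> enorm (sol F x0 Ts k) <= c.
Proof.
move=> tau_gt0 T_ge0 window short reenter; elim/ltn_ind => k IH Ts x0 TsT x0_le.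
case: (sol_passage F tau x0 k TsT tau_gt0) => [t_lt|[m [mk /andP[tau_le t_lt] -> _]]].
  by apply: short => //; lra.
have /andP[m_gt0 m_le] := mk.
apply: IH; first by rewrite ltn_subrL m_gt0 (leq_trans m_gt0 m_le).
  exact: inPhi_tshift.
by apply: reenter => //; rewrite tau_le /=; lra.
Qed.

Lemma practical_of_windows (beta : R -> R -> R) (M1 d c rho : R) :
  0 < tau -> 0 <= T -> tau + T <= H -> class_KL beta -> 0 <= d -> d <= M1 ->
  beta M1 tau + rho <= d -> beta d 0 + rho <= c ->
  (forall Ts x0 j, inPhi T Ts -> enorm x0 <= M1 -> tsum Ts j <= H ->
     enorm (sol F x0 Ts j) <= beta (enorm x0) (tsum Ts j) + rho) ->
  forall k Ts x0, inPhi T Ts -> enorm x0 <= M1 ->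
    enorm (sol F x0 Ts k) <= beta (enorm x0) (tsum Ts k) + c.
Proof.
move=> tau_gt0 T_ge0 window betaKL d_ge0 d_le_M1 beta_tau beta_d short.
have reenter Ts x0 j : inPhi T Ts -> enorm x0 <= M1 -> tau <= tsum Ts j <= H ->
    enorm (sol F x0 Ts j) <= d.
  move=> TsT x0_le /andP[tau_le tjH]; have := short Ts x0 j TsT x0_le tjH.
  have := class_KL_le betaKL (enorm_ge0 x0) x0_le (ltW tau_gt0) tau_le; lra.
have ball_invariant := bounded_of_windows d c tau_gt0 T_ge0 window.
have {}ball_invariant k Ts x0 : inPhi T Ts -> enorm x0 <= d ->
    enorm (sol F x0 Ts k) <= c.
  apply: ball_invariant => {}Ts {}x0 j TsT x0_le; last first.
    exact: reenter TsT (le_trans x0_le d_le_M1).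
  move=> tjH; have := short Ts x0 j TsT (le_trans x0_le d_le_M1) tjH.
  have := class_KL_le betaKL (enorm_ge0 x0) x0_le (lexx 0) (tsum_ge0 j TsT); lra.
move=> k Ts x0 TsT x0_le.
have := class_KL_ge0 betaKL (enorm_ge0 x0) (tsum_ge0 k TsT).
have := class_KL_ge0 betaKL d_ge0 (lexx 0).
case: (sol_passage F tau x0 k TsT tau_gt0) => [t_lt|[m [_ /andP[tau_le t_lt] -> _]]].
  have tkH : tsum Ts k <= H by lra.
  by have := short Ts x0 k TsT x0_le tkH; lra.
have xm_le : enorm (sol F x0 Ts m) <= d by apply: reenter => //; rewrite tau_le /=; lra.
by have := ball_invariant (k - m)%N (tshift Ts m) _ (inPhi_tshift m TsT) xm_le; lra.
Qed.

(* Halving at least once per window of length H gives the rate ln 2 / H. *)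
Lemma exponential_of_windows (r c : R) :
  0 < tau -> 0 <= T -> tau + T <= H -> 0 <= c ->
  (forall Ts x0 j, inPhi T Ts -> enorm x0 <= r -> tsum Ts j <= H ->
     enorm (sol F x0 Ts j) <= c * enorm x0) ->
  (forall Ts x0 j, inPhi T Ts -> enorm x0 <= r -> tau <= tsum Ts j <= H ->
     enorm (sol F x0 Ts j) <= enorm x0 / 2) ->
  forall k Ts x0, inPhi T Ts -> enorm x0 <= r ->
    enorm (sol F x0 Ts k) <= 2 * c * enorm x0 * expR (- (ln 2 / H * tsum Ts k)).
Proof.
move=> tau_gt0 T_ge0 window c_ge0 short contract.
set lam := ln 2 / H.
have H_gt0 : 0 < H by lra.
have ln2_gt0 : 0 < ln (2 : R) by rewrite ln_gt0 // ltr1n.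
have lam_gt0 : 0 < lam by rewrite divr_gt0.
have half t : 0 <= t <= H -> 2^-1 <= expR (- (lam * t)).
  move=> /andP[_ t_le].
  have -> : (2^-1 : R) = expR (- (lam * H)).
    by rewrite /lam divfK ?gt_eqF // expRN lnK // posrE ltr0n.
  by rewrite ler_expR lerN2 ler_wpM2l // ltW.
elim/ltn_ind => k IH Ts x0 TsT x0_le.
have x0_ge0 := enorm_ge0 x0.
have cx0_ge0 : 0 <= c * enorm x0 by rewrite mulr_ge0.
case: (sol_passage F tau x0 k TsT tau_gt0)
  => [t_lt|[m [mk /andP[tau_le t_lt] -> ->]]].
  have t_range : 0 <= tsum Ts k <= H by rewrite (tsum_ge0 _ TsT) /=; lra.
  have := half _ t_range; have := short Ts x0 k TsT x0_le (proj2 (andP t_range)).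
  nra.
have /andP[m_gt0 m_le] := mk.
set x := sol F x0 Ts m; set s := tsum (tshift Ts m) (k - m).
have x_half : enorm x <= enorm x0 / 2.
  by apply: contract => //; rewrite tau_le /=; lra.
have := IH (k - m)%N _ (tshift Ts m) x (inPhi_tshift m TsT).
rewrite ltn_subrL m_gt0 (leq_trans m_gt0 m_le) => /(_ isT).
have x_le : enorm x <= r by have := enorm_ge0 x; lra.
move=> /(_ x_le); rewrite -/s => IHx.
have tm_range : 0 <= tsum Ts m <= H by rewrite (tsum_ge0 _ TsT) /=; lra.
have := half _ tm_range.
rewrite mulrDr opprD expRD => Em_ge.
have Es_ge0 := expR_ge0 (- (lam * s)).
apply: (le_trans IHx); apply: (@le_trans _ _ (c * enorm x0 * expR (- (lam * s)))).
  by rewrite ler_wpM2r //; nra.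
by rewrite mulrA ler_wpM2r //; nra.
Qed.

End Restart.

Section Transfer.
Context {R : realType} {n : nat}.
Implicit Types Fa Fb : DTmodel R n.

Lemma SPS_VSR_EPC Fa Fb : EPC Fa Fb -> SPS_VSR Fb -> SPS_VSR Fa.
Proof.
move=> epc [beta [betaKL stab_b]]; exists beta; split => // M Rr M_ge0 Rr_gt0.
have Rr4_gt0 : 0 < Rr / 4 by rewrite divr_gt0.
have [d d_gt0 beta_d] := class_K_small (betaKL.1 0 (lexx 0)) Rr4_gt0.
set M1 := M + d.
have M1_gt0 : 0 < M1 by rewrite /M1; lra.
have d3_gt0 : 0 < d / 3 by rewrite divr_gt0.
have [tau tau_gt0 beta_tau] := class_KL_small betaKL M1_gt0 d3_gt0.
set r := Num.min (d / 3) (Rr / 4).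
have r_gt0 : 0 < r by rewrite lt_min d3_gt0.
have r_le_d : r <= d / 3 by rewrite ge_min lexx.
have r_le_Rr : r <= Rr / 4 by rewrite ge_min lexx orbT.
have [Tb [Tb_gt0 solb_le]] := stab_b M1 r (ltW M1_gt0) r_gt0.
set B := beta M1 0 + r.
have B_gt0 : 0 < B by rewrite ltr_wpDl // class_KL_ge0 // ltW.
have Tb1_gt0 : 0 < Num.min Tb 1 by rewrite lt_min Tb_gt0 ltr01.
have [Tst /andP[Tst_gt0 Tst_le] close] := EPC_finite_horizon B (tau + 1) (r / B)
  (Num.min Tb 1) epc (ltW B_gt0) (divr_gt0 r_gt0 B_gt0) Tb1_gt0.
have window Ts x0 j : inPhi Tst Ts -> enorm x0 <= M1 -> tsum Ts j <= tau + 1 ->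
    enorm (sol Fa x0 Ts j) <= beta (enorm x0) (tsum Ts j) + 2 * r.
  move=> TsT x0_le tjH.
  have TsTb : inPhi Tb Ts by apply: inPhi_le TsT; rewrite (le_trans Tst_le) // ge_min lexx.
  have solb_B i : enorm (sol Fb x0 Ts i) <= B.
    apply: le_trans (solb_le i Ts x0 TsTb x0_le) _.
    by rewrite lerD2r class_KL_le ?enorm_ge0 ?(tsum_ge0 _ TsT).
  have := close Ts x0 B j TsT (lexx B) solb_B tjH; rewrite divfK ?gt_eqF //.
  have := enorm_le_add_dist (sol Fa x0 Ts j) (sol Fb x0 Ts j).
  have := solb_le j Ts x0 TsTb x0_le.
  lra.
have window_len : tau + Tst <= tau + 1.
  by rewrite lerD2l (le_trans Tst_le) // ge_min lexx orbT.
have d_le_M1 : d <= M1 by rewrite /M1; lra.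
have tau_reenter : beta M1 tau + 2 * r <= d by lra.
have d_small : beta d 0 + 2 * r <= Rr.
  by have := beta_d d; rewrite lexx (ltW d_gt0) => /(_ isT); lra.
exists Tst; split => // k Ts x0 TsT x0_le.
have x0_M1 : enorm x0 <= M1 by rewrite /M1; lra.
exact: (practical_of_windows Fa beta M1 d Rr (2 * r) tau_gt0 (ltW Tst_gt0) window_len
  betaKL (ltW d_gt0) d_le_M1 tau_reenter d_small window k Ts x0 TsT x0_M1).
Qed.

Lemma LES_VSR_EPC Fa Fb : EPC Fa Fb -> LES_VSR Fb -> LES_VSR Fa.
Proof.
move=> epc [K0 [r0 [T0 [lam [K0_ge1 [r0_gt0 [T0_gt0 [lam_gt0 solb_le]]]]]]]].
have K0_gt0 : 0 < K0 by lra.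
have ln4K0_gt0 : 0 < ln (4 * K0) by rewrite ln_gt0 //; lra.
set tau := ln (4 * K0) / lam.
have tau_gt0 : 0 < tau by rewrite divr_gt0.
have decay_tau : K0 * expR (- (lam * tau)) = 4^-1.
  rewrite /tau [lam * _]mulrC divfK ?gt_eqF // expRN lnK ?posrE; last by lra.
  by field; rewrite gt_eqF.
have exp_le1 t : 0 <= t -> expR (- (lam * t)) <= 1.
  by move=> t_ge0; rewrite -expR0 ler_expR oppr_le0 mulr_ge0 // ltW.
have Bmax_ge0 : 0 <= K0 * r0 by rewrite mulr_ge0 // ltW.
have eps_gt0 : 0 < (4 * K0)^-1 by rewrite invr_gt0 mulr_gt0.
have T01_gt0 : 0 < Num.min T0 1 by rewrite lt_min T0_gt0 ltr01.
have [Tst /andP[Tst_gt0 Tst_le] close] :=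
  EPC_finite_horizon _ (tau + 1) _ _ epc Bmax_ge0 eps_gt0 T01_gt0.
have window Ts x0 j : inPhi Tst Ts -> enorm x0 <= r0 -> tsum Ts j <= tau + 1 ->
    enorm (sol Fa x0 Ts j) <= K0 * enorm x0 * expR (- (lam * tsum Ts j)) + enorm x0 / 4.
  move=> TsT x0_le tjH.
  have TsT0 : inPhi T0 Ts by apply: inPhi_le TsT; rewrite (le_trans Tst_le) // ge_min lexx.
  have K0x0_ge0 : 0 <= K0 * enorm x0 by rewrite mulr_ge0 ?enorm_ge0 // ltW.
  have solb_B i : enorm (sol Fb x0 Ts i) <= K0 * enorm x0.
    apply: le_trans (solb_le i Ts x0 TsT0 x0_le) _.
    by rewrite ler_piMr // exp_le1 // (tsum_ge0 _ TsT).
  have B_le : K0 * enorm x0 <= K0 * r0 by rewrite ler_wpM2l // ltW.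
  have := close Ts x0 _ j TsT B_le solb_B tjH.
  have -> : (4 * K0)^-1 * (K0 * enorm x0) = enorm x0 / 4 by field; rewrite gt_eqF.
  have := enorm_le_add_dist (sol Fa x0 Ts j) (sol Fb x0 Ts j).
  have := solb_le j Ts x0 TsT0 x0_le.
  lra.
exists (2 * (2 * K0)), r0, Tst, (ln 2 / (tau + 1)).
do 3 (split; first by lra).
split; first by rewrite divr_gt0 ?ln_gt0 ?ltr1n //; lra.
have window_len : tau + Tst <= tau + 1 by rewrite lerD2l (le_trans Tst_le) // ge_min lexx orbT.
apply: (exponential_of_windows Fa r0) tau_gt0 (ltW Tst_gt0) window_len _ _ _
  => [|Ts x0 j TsT x0_le tjH|Ts x0 j TsT x0_le /andP[tau_le tjH]].
- by lra.
- have := window Ts x0 j TsT x0_le tjH; have := exp_le1 _ (tsum_ge0 j TsT).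
  have := enorm_ge0 x0; have : 0 <= K0 * enorm x0 by rewrite mulr_ge0 ?enorm_ge0 // ltW.
  nra.
have := window Ts x0 j TsT x0_le tjH.
have : K0 * expR (- (lam * tsum Ts j)) <= 4^-1.
  by rewrite -decay_tau ler_wpM2l ?(ltW K0_gt0) // ler_expR lerN2 ler_wpM2l // ltW.
have := enorm_ge0 x0.
nra.
Qed.

End Transfer.

Theorem theorem1 (R : realType) (n : nat) (Fa Fb : DTmodel R n) :
  EPC Fa Fb ->
  (SPS_VSR Fa <-> SPS_VSR Fb) /\
  (LES_VSR Fa <-> LES_VSR Fb) /\
  (SLES_VSR Fa <-> SLES_VSR Fb).
Proof.
move=> epc; have epc' := EPC_sym epc.
have SPS_iff : SPS_VSR Fa <-> SPS_VSR Fb.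
  by split; [exact: SPS_VSR_EPC epc' | exact: SPS_VSR_EPC epc].
have LES_iff : LES_VSR Fa <-> LES_VSR Fb.
  by split; [exact: LES_VSR_EPC epc' | exact: LES_VSR_EPC epc].
by rewrite /SLES_VSR SPS_iff LES_iff.
Qed.
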